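(* Let $\Omega\subset\{1,\dots,N\}$ have cardinality $n$, let $0<\epsilon<1$, $\delta>0$, $s\in\mathbb{N}$, and let $b\in\mathbb{R}^N$, $c\in\mathbb{R}^{2N-1}$ be random vectors with independent Bernoulli $\pm1$ entries. Let $\delta_s$ denote the restricted isometry constant of order $s$ of either $\frac1{\sqrt n}S^b_\Omega$ or $\frac1{\sqrt n}T^c_\Omega$. Assume $$ n\ge 16\,\delta^{-2}s^2\log^2(2N^2/\epsilon).$$ Then with probability at least $1-\epsilon$ it holds $\delta_s\le\delta$.
   Context: For $b=(b_0,\dots,b_{N-1})\in\mathbb{R}^N$ the circulant matrix $S^b\in\mathbb{R}^{N\times N}$ has entries $S^b_{i,j}=b_{(j-i)\bmod N}$, $i,j=1,\dots,N$. For $c=(c_{-N+1},\dots,c_{N-1})\in\mathbb{R}^{2N-1}$ the Toeplitz matrix $T^c\in\mathbb{R}^{N\times N}$ has entries $T^c_{i,j}=c_{j-i}$. $S^b_\Omega$ (resp. $T^c_\Omega$) is the submatrix consisting of the rows indexed by $\Omega$. A Bernoulli $\pm1$ variable takes values $\pm1$ with probability $1/2$ each. The restricted isometry constant $\delta_s$ of a matrix $A$ is the smallest $\delta\ge0$ such that $(1-\delta)\|x\|_2^2\le\|Ax\|_2^2\le(1+\delta)\|x\|_2^2$ for all $x$ with at most $s$ non-zero entries. *)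

From HB Require Import structures.
From mathcomp Require Import all_boot all_order all_algebra.
From mathcomp Require Import all_classical all_reals all_analysis.
Set Implicit Arguments. Unset Strict Implicit. Unset Printing Implicit Defensive.
Import Order.TTheory GRing.Theory Num.Theory.
Local Open Scope ring_scope.
Local Open Scope classical_set_scope.

Definition pm1 (R : pzRingType) (b : bool) : R := if b then 1 else -1.

(* Circulant matrix S^b : entries b_{(j-i) mod N}; indices 0..N-1. *)
Definition circulant (R : pzRingType) (N : nat) (b : {ffun 'I_N -> bool}) : 'M[R]_N :=
  \matrix_(i < N, j < N)
    (if insub ((j + N - i) %% N)%N is Some k then pm1 R (b k) else 0).

(* Toeplitz matrix T^c : entries c_{j-i}, with c_{-N+1..N-1} stored at
   positions 0..2N-2, i.e. c_k is stored at index k + N - 1. *)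
Definition toeplitz (R : pzRingType) (N : nat) (c : {ffun 'I_(2 * N).-1 -> bool}) : 'M[R]_N :=
  \matrix_(i < N, j < N)
    (if insub (j + N.-1 - i)%N is Some k then pm1 R (c k) else 0).

Definition rowsubset (R : Type) (N : nat) (Om : {set 'I_N}) (A : 'M[R]_N)
  : 'M[R]_(#|Om|, N) := \matrix_(i < #|Om|, j < N) A (enum_val i) j.

Definition sqnorm (R : pzRingType) (m : nat) (x : 'cV[R]_m) : R := \sum_i (x i ord0) ^+ 2.

Definition sparse (R : pzRingType) (N s : nat) (x : 'cV[R]_N) : bool :=
  (#|[set j | x j ord0 != 0%R]| <= s)%N.

Definition rip_set (R : realType) (m N s : nat) (A : 'M[R]_(m, N)) : set R :=
  [set d | 0 <= d /\ forall x : 'cV[R]_N, sparse s x ->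
      (1 - d) * sqnorm x <= sqnorm (A *m x) /\ sqnorm (A *m x) <= (1 + d) * sqnorm x].

Definition ric (R : realType) (m N s : nat) (A : 'M[R]_(m, N)) : R := inf (rip_set s A).

(* Probability of an event on independent uniform Bernoulli vectors. *)
Definition prob (R : realType) (M : nat) (E : pred {ffun 'I_M -> bool}) : R :=
  #|[set b | E b]|%:R / (2 ^ M)%:R.

(* A matrix B with entries in {1, -1} satisfies
   | |Bx|^2 - n |x|^2 | <= t (sum_j |x_j|)^2 <= t s |x|^2 for s-sparse x, where t bounds
   the inner products of distinct columns; so the restricted isometry constant of
   n^(-1/2) B is at most delta as soon as s t <= delta n.  For partial circulant and
   Toeplitz matrices, the inner product of columns j < k is a sum of at most two partial
   autocorrelations sum_(m in A) y_m y_(m+d) with d > 0 and #|A| <= n.  The substitution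
   y_m := y_m y_(m+d) (kept as y_m when m + d is out of range) is a bijection of the
   sign vectors, so such an autocorrelation is distributed as a Rademacher sum, and the
   Chernoff bound gives P(|.| > 2 sqrt(n) L) <= 2 exp(-15 L^2 / 16).  A union bound over
   the N^2 pairs of columns with L = ln(2 N^2 / eps) and t = 4 sqrt(n) L concludes. *)

From mathcomp Require Import all_boot all_order all_algebra.
From mathcomp Require Import all_classical all_reals all_analysis.
From mathcomp.algebra_tactics Require Import ring lra.
From mathcomp Require Import zify.
Set Implicit Arguments. Unset Strict Implicit. Unset Printing Implicit Defensive.
Import Order.TTheory GRing.Theory Num.Theory.
Local Open Scope ring_scope.

Lemma card_set_sum (R : pzSemiRingType) (T : finType) (P : pred T) :
  #|[set b | P b]|%:R = \sum_b (P b)%:R :> R.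
Proof.
rewrite -sum1_card natr_sum big_mkcond /=; apply: eq_bigr => b _.
by rewrite inE; case: (P b).
Qed.

Lemma card_classical_set (T : finType) (P : pred T) :
  #|[set b | P b]%classic| = #|[set b | P b]|.
Proof. by apply: eq_card => j; rewrite inE; apply/idP/idP => [/set_mem|/mem_set]. Qed.

Section Rademacher.
Variable R : realType.

Lemma expR_add_expRN_le (l : R) : `|l| <= 1/4 ->
  expR l + expR (- l) <= 2 * expR (16/15 * l ^+ 2).
Proof.
rewrite ler_norml => /andP [hl1 hl2].
have hab : expR l * expR (- l) = 1 by rewrite expRN mulfV // gt_eqF ?expR_gt0.
have ha := expR_gt0 l; have hb := expR_gt0 (- l).
have h1 := expR_ge1Dx l; have h2 := expR_ge1Dx (- l).
have h3 := expR_ge1Dx (16/15 * l ^+ 2).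
have e1 : expR l * (1 - l) <= 1 by rewrite -hab ler_pM2l //; lra.
have e2 : expR (- l) * (1 + l) <= 1 by rewrite -hab mulrC ler_pM2r //; lra.
nra.
Qed.

Lemma sum_expR_rademacher_le M (A : {set 'I_M}) (l : R) : `|l| <= 1/4 ->
  \sum_(z : {ffun 'I_M -> bool}) expR (l * \sum_(m in A) pm1 R (z m))
  <= 2 ^+ M * expR (16/15 * l ^+ 2 * #|A|%:R).
Proof.
move=> hl.
have -> : \sum_(z : {ffun 'I_M -> bool}) expR (l * \sum_(m in A) pm1 R (z m))
    = \prod_(m : 'I_M) \sum_(b : bool) (if m \in A then expR (l * pm1 R b) else 1).
  rewrite bigA_distr_bigA /=; apply: eq_bigr => z _.
  by rewrite mulr_sumr expR_sum big_mkcond.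
apply: (@le_trans _ _ (\prod_(m : 'I_M) (2 * expR (16/15 * l ^+ 2 * (m \in A)%:R)))).
  apply: ler_prod => m _; rewrite big_bool /=.
  case: (m \in A) => /=; last by rewrite mulr0 expR0 mulr1; lra.
  rewrite /pm1 mulr1 mulrN1 mulr1 addrC.
  by have := expR_gt0 l; have := expR_gt0 (- l); have := expR_add_expRN_le hl; lra.
rewrite big_split /= prodr_const card_ord -expR_sum -mulr_sumr.
have -> : \sum_(m < M) (m \in A)%:R = #|A|%:R :> R.
  by rewrite -sum1_card natr_sum [RHS]big_mkcond; apply: eq_bigr => m _; case: (m \in A).
by [].
Qed.

Lemma lt_norm_le_expR (u x l : R) : 0 <= l ->
  ((u < `|x|)%R)%:R <= expR (- (l * u)) * (expR (l * x) + expR (- (l * x))).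
Proof.
move=> l0; have := expR_gt0 (- (l * u) + l * x); have := expR_gt0 (- (l * u) + - (l * x)).
rewrite mulrDr -!expRD; case: (ltP u `|x|) => hu /= p1 p2; last by lra.
have key : l * u <= l * `|x| := ler_wpM2l l0 (ltW hu).
suff : 1 <= expR (- (l * u) + l * x) \/ 1 <= expR (- (l * u) + - (l * x)) by lra.
rewrite -expR0 !ler_expR; case: (lerP 0 x) => x0; [left|right].
  by rewrite ger0_norm in key; lra.
by rewrite ltr0_norm in key; lra.
Qed.

Lemma card_rademacher_tail M (A : {set 'I_M}) (r L : R) :
  0 < L -> 4 * L < r -> #|A|%:R <= r ^+ 2 ->
  #|[set z : {ffun 'I_M -> bool} | 2 * r * L < `|\sum_(m in A) pm1 R (z m)|]|%:R
  <= 2 ^+ M * (2 * expR (- (15/16 * L ^+ 2))).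
Proof.
move=> L0 hLr hA; have r0 : 0 < r by lra.
pose l := 15 * L / (16 * r).
have l0 : 0 <= l by rewrite /l divr_ge0 //; lra.
have hl : `|l| <= 1/4 by rewrite ger0_norm // /l ler_pdivrMr; lra.
have hlA : 16/15 * l ^+ 2 * #|A|%:R <= 16/15 * l ^+ 2 * r ^+ 2.
  by rewrite ler_wpM2l // mulr_ge0 ?sqr_ge0 //; lra.
have exponent : - (l * (2 * r * L)) + 16/15 * l ^+ 2 * r ^+ 2 = - (15/16 * L ^+ 2).
  by rewrite /l; field; lra.
rewrite card_set_sum.
apply: le_trans (ler_sum _ (fun z _ => lt_norm_le_expR _ _ l0)) _.
rewrite -mulr_sumr big_split /= -exponent expRD.
have sumN : \sum_(z : {ffun 'I_M -> bool}) expR (- (l * \sum_(m in A) pm1 R (z m)))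
    <= 2 ^+ M * expR (16/15 * l ^+ 2 * #|A|%:R).
  under eq_bigr => z _ do rewrite -mulNr.
  by rewrite -[l ^+ 2]sqrrN; apply: sum_expR_rademacher_le; rewrite normrN.
have sumP := sum_expR_rademacher_le A hl.
have FG : expR (16/15 * l ^+ 2 * #|A|%:R) <= expR (16/15 * l ^+ 2 * r ^+ 2) by rewrite ler_expR.
have pE := expR_gt0 (- (l * (2 * r * L))).
have p2 : (0 : R) < 2 ^+ M by apply: exprn_gt0.
have MFG : 2 ^+ M * expR (16/15 * l ^+ 2 * #|A|%:R) <= 2 ^+ M * expR (16/15 * l ^+ 2 * r ^+ 2).
  by rewrite ler_wpM2l // ltW.
nra.
Qed.
Lemma ln_ge_9_5 (x : R) : 8 <= x -> 9/5 <= ln x.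
Proof.
move=> hx; have e0 := expR_gt0 (1/5 : R); have h1 := expR_ge1Dx (- (1/5) : R).
have hab : expR (1/5 : R) * expR (- (1/5)) = 1 by rewrite expRN mulfV // gt_eqF.
have e1 : expR (1/5 : R) <= 5/4 by nra.
have e3 : expR (1/5 : R) ^+ 3 <= 2.
  have e3' : (5/4 : R) ^+ 3 <= 2 by rewrite !exprS expr0; lra.
  by apply: le_trans e3'; apply: lerXn2r; rewrite ?nnegrE //; lra.
have e9 : expR (9/5 : R) = (expR (1/5) ^+ 3) ^+ 3.
  by rewrite -exprM -expRM_natl; congr expR; lra.
rewrite -[9/5 : R]expRK ler_ln ?posrE ?expR_gt0 //; last by lra.
apply: le_trans hx; rewrite e9 (_ : 8 = 2 ^+ 3 :> R); last by rewrite !exprS expr0; lra.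
by apply: (lerXn2r 3) => //; rewrite nnegrE ?exprn_ge0 ?ltW.
Qed.

Lemma expR_tail_le (L : R) : 9/5 <= L -> 4 * expR (- (15/16 * L ^+ 2)) <= 2 * expR (- L).
Proof.
move=> hL; have e : expR (- L) = expR (- (15/16 * L ^+ 2)) * expR (15/16 * L ^+ 2 - L).
  by rewrite -expRD; congr expR; lra.
have h1 : 1 <= 15/16 * L ^+ 2 - L by nra.
have := expR_ge1Dx (15/16 * L ^+ 2 - L); have := expR_gt0 (- (15/16 * L ^+ 2)).
rewrite e; nra.
Qed.
End Rademacher.

Definition pm1_at (R : pzRingType) M (y : {ffun 'I_M -> bool}) (m : nat) : R :=
  if insub m is Some k then pm1 R (y k) else 0.

Definition autocorr (R : pzRingType) M (A : {set 'I_M}) (d : nat)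
  (y : {ffun 'I_M -> bool}) : R :=
  \sum_(m in A) pm1_at R y m * pm1_at R y (m + d).

Definition prod_shift M (d : nat) (y : {ffun 'I_M -> bool}) : {ffun 'I_M -> bool} :=
  [ffun m : 'I_M => if insub (m + d)%N is Some m' then y m == y m' else y m].

Lemma prod_shift_inj M d : (0 < d)%N -> injective (@prod_shift M d).
Proof.
move=> d0 y1 y2 e; apply/ffunP.
suff H k (m : 'I_M) : (M - k <= m)%N -> y1 m = y2 m by move=> m; apply: (H M); rewrite subnn.
elim: k m => [|k IH] m hm; first by have := ltn_ord m; lia.
have := congr1 (fun f : {ffun _ -> bool} => f m) e; rewrite !ffunE.
case: insubP => [m' _ hv|] //.
have -> : y1 m' = y2 m' by apply: IH; rewrite hv; lia.
by case: (y1 m); case: (y2 m); case: (y2 m').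
Qed.

Section Autocorrelation.
Variable R : realType.

Lemma pm1_at_ord M (y : {ffun 'I_M -> bool}) (m : 'I_M) : pm1_at R y m = pm1 R (y m).
Proof. by rewrite /pm1_at; case: insubP => [k _ /val_inj -> //|]; rewrite ltn_ord. Qed.

Lemma pm1_at_sqr M (y : {ffun 'I_M -> bool}) (m : nat) : (m < M)%N -> pm1_at R y m ^+ 2 = 1.
Proof.
move=> h; rewrite /pm1_at; case: insubP => [k _ _|]; last by rewrite h.
by case: (y k); rewrite /pm1 ?sqrrN expr1n.
Qed.

Lemma autocorr_prod_shift M (A : {set 'I_M}) d (y : {ffun 'I_M -> bool}) :
  (forall m, m \in A -> m + d < M)%N ->
  autocorr R A d y = \sum_(m in A) pm1 R (prod_shift d y m).
Proof.
move=> hA; apply: eq_bigr => m /hA hm; rewrite pm1_at_ord /pm1_at ffunE.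
case: insubP => [k _ _|]; last by rewrite hm.
by case: (y m); case: (y k); rewrite /pm1 /= ?mulr1 ?mulrNN ?mulrN1 ?mul1r.
Qed.

Lemma card_autocorr_tail M (A : {set 'I_M}) d (r L : R) :
  (0 < d)%N -> (forall m, m \in A -> m + d < M)%N ->
  0 < L -> 4 * L < r -> #|A|%:R <= r ^+ 2 ->
  #|[set y | 2 * r * L < `|autocorr R A d y|]|%:R
  <= 2 ^+ M * (2 * expR (- (15/16 * L ^+ 2))).
Proof.
move=> d0 hA L0 hLr hAr; apply: le_trans (card_rademacher_tail L0 hLr hAr).
rewrite !card_set_sum [leRHS](reindex_inj (prod_shift_inj d0)) /=.
by under eq_bigr => y _ do rewrite autocorr_prod_shift //.
Qed.
End Autocorrelation.

Section RestrictedIsometry.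
Variable R : realType.


Lemma ric_le m N s (A : 'M[R]_(m, N)) (d : R) : rip_set s A d -> ric s A <= d.
Proof. by move=> h; apply: ge_inf h; exists 0 => x []. Qed.

Lemma sqnorm_ge0 m (x : 'cV[R]_m) : 0 <= sqnorm x.
Proof. by apply: sumr_ge0 => j _; apply: sqr_ge0. Qed.

Lemma sqnorm_sparse0 N (x : 'cV[R]_N) : sparse 0 x -> sqnorm x = 0.
Proof.
rewrite /sparse card_classical_set leqn0 cards_eq0 => /eqP S0.
rewrite /sqnorm big1 // => j _; have : j \notin [set j | x j ord0 != 0] by rewrite S0 inE.
by rewrite inE negbK => /eqP ->; rewrite expr0n.
Qed.

Lemma sqr_sum_le_card_sum_sqr (I : finType) (S : {set I}) (f : I -> R) :
  (\sum_(i in S) f i) ^+ 2 <= #|S|%:R * \sum_(i in S) f i ^+ 2.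
Proof.
have -> : #|S|%:R * \sum_(i in S) f i ^+ 2
    = \sum_(i in S) \sum_(j in S) (f i ^+ 2 + f j ^+ 2) / 2.
  under [RHS]eq_bigr => i _ do rewrite -mulr_suml big_split /= sumr_const.
  by rewrite -mulr_suml big_split /= sumr_const sumrMnl; lra.
rewrite expr2 mulr_suml; apply: ler_sum => i _; rewrite mulr_sumr.
by apply: ler_sum => j _; have := sqr_ge0 (f i - f j); lra.
Qed.

Lemma sqr_sum_norm_le_sparse N s (x : 'cV[R]_N) : sparse s x ->
  (\sum_j `|x j ord0|) ^+ 2 <= s%:R * sqnorm x.
Proof.
rewrite /sparse card_classical_set; set S := [set j | x j ord0 != 0] => hs.
have -> : \sum_j `|x j ord0| = \sum_(j in S) `|x j ord0|.
  rewrite [RHS]big_mkcond; apply: eq_bigr => j _; rewrite inE.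
  by case: eqP => // ->; rewrite normr0.
have -> : sqnorm x = \sum_(j in S) `|x j ord0| ^+ 2.
  rewrite [RHS]big_mkcond; apply: eq_bigr => j _; rewrite inE real_normK ?num_real //.
  by case: eqP => // ->; rewrite expr0n.
apply: le_trans (sqr_sum_le_card_sum_sqr _ _) _.
by rewrite ler_wpM2r ?ler_nat // sumr_ge0 // => j _; apply: sqr_ge0.
Qed.

Lemma sqnorm_scale m (a : R) (x : 'cV[R]_m) : sqnorm (a *: x) = a ^+ 2 * sqnorm x.
Proof. by rewrite /sqnorm mulr_sumr; apply: eq_bigr => i _; rewrite mxE exprMn. Qed.

Lemma sqnorm_mulmx n N (B : 'M[R]_(n, N)) (x : 'cV[R]_N) :
  sqnorm (B *m x) = \sum_j \sum_k x j ord0 * x k ord0 * \sum_i B i j * B i k.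
Proof.
rewrite /sqnorm; under eq_bigr => i _ do rewrite mxE expr2 mulr_suml.
rewrite exchange_big; apply: eq_bigr => j _; under eq_bigr => i _ do rewrite mulr_sumr.
rewrite exchange_big; apply: eq_bigr => k _; rewrite mulr_sumr.
by apply: eq_bigr => i _; ring.
Qed.

Lemma norm_sqnorm_mulmx_sub_le n N (B : 'M[R]_(n, N)) (x : 'cV[R]_N) (t : R) :
  (forall i j, B i j ^+ 2 = 1) -> 0 <= t ->
  (forall j k, j != k -> `|\sum_i B i j * B i k| <= t) ->
  `|sqnorm (B *m x) - n%:R * sqnorm x| <= t * (\sum_j `|x j ord0|) ^+ 2.
Proof.
move=> B1 t0 hG.
have diag : n%:R * sqnorm x
    = \sum_j \sum_k x j ord0 * x k ord0 * ((j == k)%:R * n%:R).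
  rewrite mulr_sumr; apply: eq_bigr => j _; rewrite (bigD1 j) //= big1 ?addr0.
    by case: eqP => // _; rewrite mul1r; ring.
  by move=> k kj; rewrite eq_sym (negbTE kj) mul0r mulr0.
rewrite sqnorm_mulmx diag -sumrB expr2 mulr_suml mulr_sumr.
apply: le_trans (ler_norm_sum _ _ _) _; apply: ler_sum => j _.
rewrite -sumrB mulr_sumr mulr_sumr; apply: le_trans (ler_norm_sum _ _ _) _.
apply: ler_sum => k _; rewrite -mulrBr mulrC !normrM.
apply: ler_wpM2r; first by rewrite mulr_ge0.
case: (eqVneq j k) => [<-|/hG]; last by rewrite mul0r subr0.
rewrite mul1r (eq_bigr (fun _ => 1)); last by move=> i _; rewrite -expr2 B1.
by rewrite sumr_const card_ord subrr normr0.
Qed.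

Lemma ric_scale_le_coherence n N s (B : 'M[R]_(n, N)) (dl t : R) :
  (0 < n)%N -> (forall i j, B i j ^+ 2 = 1) -> 0 <= t -> 0 <= dl ->
  s%:R * t <= dl * n%:R ->
  (forall j k, j != k -> `|\sum_i B i j * B i k| <= t) ->
  ric s ((Num.sqrt n%:R)^-1 *: B) <= dl.
Proof.
move=> n0 B1 t0 dl0 hst hG; apply: ric_le; split => // x hx.
have nR : (0 : R) < n%:R by rewrite ltr0n.
have a2 : (Num.sqrt n%:R)^-1 ^+ 2 = (n%:R : R)^-1 by rewrite exprVn sqr_sqrtr // ltW.
rewrite -scalemxAl sqnorm_scale a2.
have := norm_sqnorm_mulmx_sub_le x B1 t0 hG.
have := sqr_sum_norm_le_sparse hx; have := sqnorm_ge0 x.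
set X := sqnorm x; set Y := sqnorm (B *m x); set Z := (\sum_j _) ^+ 2.
move=> X0 ZX /ler_normlP [h1 h2].
have : t * Z <= dl * n%:R * X.
  by apply: le_trans (ler_wpM2l t0 ZX) _; rewrite mulrA [t * _]mulrC ler_wpM2r.
move=> tZ; have nK : n%:R * (n%:R^-1 * Y) = Y by rewrite mulVKf ?gt_eqF.
by split; rewrite -(ler_pM2l nR) nK; lra.
Qed.
Lemma card_exists_le (T I : finType) (P : I -> pred T) (X : R) :
  (forall i, #|[set b | P i b]|%:R <= X) ->
  #|[set b | [exists i, P i b]]|%:R <= #|I|%:R * X.
Proof.
move=> hP; rewrite card_set_sum.
have union : \sum_b ([exists i, P i b])%:R <= \sum_(b : T) \sum_(i : I) (P i b)%:R :> R.
  apply: ler_sum => b _; case: existsP => [[i Pi]|_]; last by rewrite sumr_ge0.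
  by rewrite (bigD1 i) //= Pi lerDl sumr_ge0.
apply: le_trans union _; rewrite exchange_big mulr_natl -sumr_const; apply: ler_sum => i _.
by rewrite -card_set_sum.
Qed.

Lemma prob_ge_card_bad M (E bad : pred {ffun 'I_M -> bool}) (eps : R) :
  (forall b, ~~ bad b -> E b) -> #|[set b | bad b]|%:R <= eps * 2 ^+ M ->
  1 - eps <= prob R E.
Proof.
move=> hE hbad; have p2 : (0 : R) < 2 ^+ M by apply: exprn_gt0.
rewrite /prob card_classical_set natrX ler_pdivlMr //.
have : #|[set b | ~~ bad b]|%:R <= #|[set b | E b]|%:R :> R.
  by rewrite ler_nat subset_leq_card //; apply/fintype.subsetP => b; rewrite !inE => /hE.
have := cardsC [set b | bad b]; rewrite card_ffun card_bool card_ord.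
rewrite (_ : ~: _ = [set b | ~~ bad b]); last by apply/setP => b; rewrite !inE.
move/(congr1 (fun k => k%:R : R)); rewrite natrD natrX; lra.
Qed.

Lemma prob_ric_le M n N s (B : {ffun 'I_M -> bool} -> 'M[R]_(n, N)) (dl t X eps : R) :
  (0 < n)%N -> (forall b i j, B b i j ^+ 2 = 1) -> 0 <= t -> 0 <= dl ->
  s%:R * t <= dl * n%:R -> 0 <= X ->
  (forall j k, j != k -> #|[set b | t < `|\sum_i B b i j * B b i k|]|%:R <= X) ->
  N%:R ^+ 2 * X <= eps * 2 ^+ M ->
  1 - eps <= prob R (fun b => ric s ((Num.sqrt n%:R)^-1 *: B b) <= dl).
Proof.
move=> n0 B1 t0 dl0 hst X0 hX hNX.
pose bad b := [exists jk : 'I_N * 'I_N, (jk.1 != jk.2) && (t < `|\sum_i B b i jk.1 * B b i jk.2|)].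
apply: (prob_ge_card_bad (bad := bad)).
  move=> b /existsPn good; apply: (ric_scale_le_coherence (t := t)) => // j k jk.
  by rewrite leNgt; have := good (j, k); rewrite /= jk.
apply: le_trans (card_exists_le (X := X) _) _.
  case=> j k /=; case: (eqVneq j k) => [_|/hX //].
  by rewrite (eq_finset (fun b => false)) ?cards0.
by rewrite card_prod card_ord natrM -expr2.
Qed.
End RestrictedIsometry.

Lemma modn_lt_double (N a : nat) : (a < N + N)%N ->
  (a %% N = if a < N then a else a - N)%N.
Proof.
move=> h; case: ifP => h2; first by rewrite modn_small.
have -> : a = (a - N + N)%N by lia.
by rewrite modnDr modn_small; lia.
Qed.

Definition circ_idx N (j r : 'I_N) : 'I_N :=
  Ordinal (ltn_pmod (j + N - r) (leq_ltn_trans (leq0n r) (ltn_ord r))).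

(* In row r, columns j < k of the circulant read b at circ_idx j r and
   (circ_idx j r + (k - j)) mod N; when the sum wraps around, the pair is read
   from circ_idx k r with shift N - (k - j) instead. *)
Definition circ_set N (Om : {set 'I_N}) (j k : 'I_N) : {set 'I_N} :=
  [set circ_idx j r | r in [set r in Om | (circ_idx j r + (k - j) < N)%N]].

Definition circ_wrap_set N (Om : {set 'I_N}) (j k : 'I_N) : {set 'I_N} :=
  [set circ_idx k r | r in [set r in Om | ~~ (circ_idx j r + (k - j) < N)%N]].

Lemma circ_idx_inj N (j : 'I_N) : injective (circ_idx j).
Proof.
move=> r1 r2 /(congr1 val) /= e; apply: val_inj; change (nat_of_ord r1 = nat_of_ord r2).
have := ltn_ord r1; have := ltn_ord r2; have := ltn_ord j => *.
rewrite !modn_lt_double in e; try lia.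
by move: e; case: ltnP => ?; case: ltnP => ?; lia.
Qed.

Lemma circ_idx_shift N (j k r : 'I_N) : (j <= k)%N ->
  (circ_idx k r = (circ_idx j r + (k - j)) %% N :> nat)%N.
Proof. by move=> jk /=; rewrite modnDml; congr modn; have := ltn_ord r; have := ltn_ord k; lia. Qed.

Lemma toep_idx_lt N (j r : 'I_N) : (j + N.-1 - r < (2 * N).-1)%N.
Proof. by have := ltn_ord j; have := ltn_ord r; lia. Qed.

Definition toep_idx N (j r : 'I_N) : 'I_(2 * N).-1 := Ordinal (toep_idx_lt j r).

Definition toep_set N (Om : {set 'I_N}) (j : 'I_N) : {set 'I_(2 * N).-1} :=
  [set toep_idx j r | r in Om].

Lemma toep_idx_inj N (j : 'I_N) : injective (toep_idx j).
Proof.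
move=> r1 r2 /(congr1 val) /= e; apply: val_inj; change (nat_of_ord r1 = nat_of_ord r2).
by have := ltn_ord r1; have := ltn_ord r2; have := ltn_ord j; lia.
Qed.

Section PartialCirculant.
Variable R : realType.



Lemma norm_gram_le n N (B : 'M[R]_(n, N)) (j k : 'I_N) :
  (forall i j, B i j ^+ 2 = 1) -> `|\sum_i B i j * B i k| <= n%:R.
Proof.
move=> B1; apply: le_trans (ler_norm_sum _ _ _) _.
rewrite -[n in n%:R]card_ord -sumr_const; apply: ler_sum => i _.
have : `|B i j * B i k| ^+ 2 == 1 by rewrite real_normK ?num_real // exprMn !B1 mulr1.
by rewrite sqrp_eq1 ?normr_ge0 // => /eqP ->.
Qed.

Lemma card_gram_tail M n N (B : {ffun 'I_M -> bool} -> 'M[R]_(n, N)) (j k : 'I_N)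
    (A1 A2 : {set 'I_M}) (d1 d2 : nat) (L : R) :
  (forall b i j, B b i j ^+ 2 = 1) -> 9/5 <= L ->
  (0 < d1)%N -> (forall m, m \in A1 -> m + d1 < M)%N -> (#|A1| <= n)%N ->
  (0 < d2)%N -> (forall m, m \in A2 -> m + d2 < M)%N -> (#|A2| <= n)%N ->
  (forall b, \sum_i B b i j * B b i k = autocorr R A1 d1 b + autocorr R A2 d2 b) ->
  #|[set b | 4 * Num.sqrt n%:R * L < `|\sum_i B b i j * B b i k|]|%:R
  <= 2 ^+ M * (2 * expR (- L)).
Proof.
move=> B1 hL d10 hA1 cA1 d20 hA2 cA2 hB.
have r0 : 0 <= Num.sqrt n%:R :> R := sqrtr_ge0 _.
have rn : Num.sqrt n%:R ^+ 2 = n%:R :> R by rewrite sqr_sqrtr.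
case: (ltP (4 * L) (Num.sqrt n%:R)) => hr; last first.
  rewrite (_ : [set b | _] = finset.set0) ?cards0.
    by rewrite mulr_ge0 ?exprn_ge0 // mulr_ge0 // ltW // expR_gt0.
  apply/setP => b; rewrite !inE; apply/negbTE; rewrite -leNgt.
  by apply: le_trans (norm_gram_le j k (B1 b)) _; have := ler_wpM2r r0 hr; lra.
pose tail (i : bool) b := 2 * Num.sqrt n%:R * L
  < `|if i then autocorr R A1 d1 b else autocorr R A2 d2 b|.
have tailP i : #|[set b | tail i b]|%:R <= 2 ^+ M * (2 * expR (- (15/16 * L ^+ 2))).
  by case: i; apply: card_autocorr_tail; rewrite // ?rn ?ler_nat //; lra.
have union : #|[set b | 4 * Num.sqrt n%:R * L < `|\sum_i B b i j * B b i k|]|%:R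
    <= #|[set b | [exists i, tail i b]]|%:R :> R.
  rewrite ler_nat subset_leq_card //; apply/fintype.subsetP => b; rewrite !inE hB => hS.
  apply/existsPn => none; move: hS (none true) (none false); rewrite /tail /=.
  by have := ler_normD (autocorr R A1 d1 b) (autocorr R A2 d2 b); lra.
apply: le_trans union (le_trans (card_exists_le tailP) _).
rewrite card_bool mulrCA ler_wpM2l ?exprn_ge0 //.
by apply: le_trans (expR_tail_le hL); lra.
Qed.

Lemma circulant_gram N (Om : {set 'I_N}) (b : {ffun 'I_N -> bool}) (j k : 'I_N) :
  (j < k)%N ->
  \sum_i rowsubset Om (circulant R b) i j * rowsubset Om (circulant R b) i k =
  autocorr R (circ_set Om j k) (k - j) b + autocorr R (circ_wrap_set Om j k) (N - (k - j)) b.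
Proof.
move=> jk; have kN := ltn_ord k.
have -> : \sum_i rowsubset Om (circulant R b) i j * rowsubset Om (circulant R b) i k
    = \sum_(r in Om) pm1_at R b (circ_idx j r) * pm1_at R b (circ_idx k r).
  by rewrite [RHS]big_enum_val; apply: eq_bigr => i _; rewrite !mxE.
rewrite (bigID (fun r => circ_idx j r + (k - j) < N)%N).
rewrite /autocorr !big_imset; try by move=> r1 r2 _ _; apply: circ_idx_inj.
congr (_ + _); apply: eq_big => [r|r]; rewrite ?inE // => /andP [_ wrap].
  by rewrite (circ_idx_shift r (ltnW jk)) modn_small.
rewrite mulrC; congr (_ * pm1_at R b _); move: wrap; rewrite -leqNgt => wrap.
rewrite (circ_idx_shift r (ltnW jk)) modn_lt_double; last by have := ltn_ord (circ_idx j r); lia.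
by rewrite ifN -?leqNgt //; lia.
Qed.

Lemma toeplitz_gram N (Om : {set 'I_N}) (c : {ffun 'I_(2 * N).-1 -> bool}) (j k : 'I_N) :
  (j <= k)%N ->
  \sum_i rowsubset Om (toeplitz R c) i j * rowsubset Om (toeplitz R c) i k =
  autocorr R (toep_set Om j) (k - j) c.
Proof.
move=> jk; rewrite /autocorr big_imset; last by move=> r1 r2 _ _; apply: toep_idx_inj.
rewrite [RHS]big_enum_val; apply: eq_bigr => i _; rewrite !mxE; move: (enum_val i) => r.
by congr (_ * pm1_at R c _); rewrite /=; have := ltn_ord r; have := ltn_ord k; lia.
Qed.
Lemma card_gram_tail_sym M n N (B : {ffun 'I_M -> bool} -> 'M[R]_(n, N)) (u X : R) :
  (forall j k : 'I_N, (j < k)%N -> #|[set b | u < `|\sum_i B b i j * B b i k|]|%:R <= X) ->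
  forall j k : 'I_N, j != k -> #|[set b | u < `|\sum_i B b i j * B b i k|]|%:R <= X.
Proof.
move=> h j k; rewrite neq_ltn => /orP [/h //|kj].
by under eq_finset => b do under eq_bigr => i _ do rewrite mulrC; exact: h.
Qed.

Lemma circulant_entry_sqr N (Om : {set 'I_N}) (b : {ffun 'I_N -> bool}) i j :
  rowsubset Om (circulant R b) i j ^+ 2 = 1.
Proof. by rewrite !mxE; exact: (@pm1_at_sqr R _ b _ (ltn_ord (circ_idx j (enum_val i)))). Qed.

Lemma toeplitz_entry_sqr N (Om : {set 'I_N}) (c : {ffun 'I_(2 * N).-1 -> bool}) i j :
  rowsubset Om (toeplitz R c) i j ^+ 2 = 1.
Proof. by rewrite !mxE; exact: (@pm1_at_sqr R _ c _ (ltn_ord (toep_idx j (enum_val i)))). Qed.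

Lemma card_circulant_gram_tail N (Om : {set 'I_N}) (L : R) (j k : 'I_N) :
  (j < k)%N -> 9/5 <= L ->
  #|[set b | 4 * Num.sqrt #|Om|%:R * L <
     `|\sum_i rowsubset Om (circulant R b) i j * rowsubset Om (circulant R b) i k|]|%:R
  <= 2 ^+ N * (2 * expR (- L)).
Proof.
move=> jk hL; have kN := ltn_ord k.
have card_le (f : 'I_N -> 'I_N) (P : pred 'I_N) :
    (#|[set f r | r in [set r in Om | P r]]| <= #|Om|)%N.
  apply: leq_trans (leq_imset_card _ _) (subset_leq_card _).
  by apply/fintype.subsetP => r; rewrite inE => /andP [].
apply: (card_gram_tail (A1 := circ_set Om j k) (A2 := circ_wrap_set Om j k)
  (d1 := k - j) (d2 := N - (k - j))) => //; try lia.
- exact: circulant_entry_sqr.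
- by move=> m /imsetP [r]; rewrite inE => /andP [_ ?] ->.
- exact: card_le.
- move=> m /imsetP [r]; rewrite inE => /andP [_ wrap] ->; move: wrap; rewrite -leqNgt.
  rewrite (circ_idx_shift r (ltnW jk)) modn_lt_double; last by have := ltn_ord (circ_idx j r); lia.
  by move=> wrap; rewrite ifN -?leqNgt //; have := ltn_ord (circ_idx j r); lia.
- exact: card_le.
- by move=> b; apply: circulant_gram.
Qed.

Lemma card_toeplitz_gram_tail N (Om : {set 'I_N}) (L : R) (j k : 'I_N) :
  (j < k)%N -> 9/5 <= L ->
  #|[set c | 4 * Num.sqrt #|Om|%:R * L <
     `|\sum_i rowsubset Om (toeplitz R c) i j * rowsubset Om (toeplitz R c) i k|]|%:R
  <= 2 ^+ (2 * N).-1 * (2 * expR (- L)).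
Proof.
move=> jk hL; apply: (card_gram_tail (A1 := toep_set Om j) (A2 := finset.set0)
  (d1 := k - j) (d2 := 1)) => //.
- exact: toeplitz_entry_sqr.
- by rewrite subn_gt0.
- by move=> m /imsetP [r _ ->] /=; have := ltn_ord r; have := ltn_ord k; lia.
- exact: leq_imset_card.
- by move=> m; rewrite inE.
- by rewrite cards0.
- by move=> c; rewrite (@toeplitz_gram N Om c j k (ltnW jk)) /autocorr big_set0 addr0.
Qed.
Lemma rip_budget n s (delta L : R) : 0 < delta -> 0 <= L ->
  16 * delta ^-2 * s%:R ^+ 2 * L ^+ 2 <= n%:R ->
  s%:R * (4 * Num.sqrt n%:R * L) <= delta * n%:R.
Proof.
move=> d0 L0 hyp; set r := Num.sqrt n%:R.
have r0 : 0 <= r := sqrtr_ge0 _.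
have <- : r ^+ 2 = n%:R by rewrite sqr_sqrtr.
have s0 : (0 : R) <= s%:R := ler0n _ _.
have sq : (4 * s%:R * L) ^+ 2 <= (delta * r) ^+ 2.
  have -> : (4 * s%:R * L) ^+ 2 = (16 * delta ^-2 * s%:R ^+ 2 * L ^+ 2) * delta ^+ 2.
    by field; rewrite gt_eqF.
  by rewrite exprMn mulrC ler_wpM2l ?sqr_ge0 // sqr_sqrtr.
have : 4 * s%:R * L <= delta * r.
  by rewrite -ler_sqr // nnegrE ?mulr_ge0 //; lra.
by move=> h; have := ler_wpM2l r0 h; lra.
Qed.

Lemma ln_ratio_ge (N : nat) (eps : R) : (2 <= N)%N -> 0 < eps -> eps < 1 ->
  9/5 <= ln (2 * N%:R ^+ 2 / eps).
Proof.
move=> N2 e0 e1; apply: ln_ge_9_5; rewrite ler_pdivlMr //.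
have : (2 : R) <= N%:R by rewrite ler_nat.
nra.
Qed.

Lemma sqr_mul_expRN_ln (N : nat) (eps : R) : (0 < N)%N -> 0 < eps ->
  N%:R ^+ 2 * (2 * expR (- ln (2 * N%:R ^+ 2 / eps))) = eps.
Proof.
move=> N0 e0; have N1 : (1 : R) <= N%:R by rewrite ler1n.
rewrite expRN lnK ?posrE; last by rewrite divr_gt0 // mulr_gt0 // exprn_gt0; lra.
by field; rewrite gt_eqF //; lra.
Qed.

Lemma prob_ric_le_of_gram_tail M n N s (B : {ffun 'I_M -> bool} -> 'M[R]_(n, N))
    (eps delta : R) :
  (0 < n)%N -> (forall b i j, B b i j ^+ 2 = 1) -> 0 < eps -> eps < 1 -> 0 < delta ->
  16 * delta ^-2 * s%:R ^+ 2 * ln (2 * N%:R ^+ 2 / eps) ^+ 2 <= n%:R ->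
  (forall L : R, 9/5 <= L -> forall j k : 'I_N, (j < k)%N ->
     #|[set b | 4 * Num.sqrt n%:R * L < `|\sum_i B b i j * B b i k|]|%:R
     <= 2 ^+ M * (2 * expR (- L))) ->
  1 - eps <= prob R (fun b => ric s ((Num.sqrt n%:R)^-1 *: B b) <= delta).
Proof.
move=> n0 B1 e0 e1 d0 hyp tail; have p2 : (0 : R) < 2 ^+ M by rewrite exprn_gt0.
have [N1 | N2] := leqP N 1.
  apply: (prob_ric_le (t := 0) (X := 0)) => //.
  - exact: ltW.
  - by rewrite mulr0 pmulr_rge0.
  - move=> j k /eqP[]; apply: ord_inj; have := ltn_ord j; have := ltn_ord k; lia.
  - by rewrite mulr0 pmulr_rge0 // ltW.
set L := ln _ in hyp; have hL : 9/5 <= L by apply: ln_ratio_ge.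
apply: (prob_ric_le (t := 4 * Num.sqrt n%:R * L) (X := 2 ^+ M * (2 * expR (- L)))) => //.
- by rewrite !mulr_ge0 ?sqrtr_ge0 //; lra.
- by rewrite ltW.
- by apply: rip_budget => //; lra.
- exact: card_gram_tail_sym (tail L hL).
- by rewrite mulrCA sqr_mul_expRN_ln ?(ltnW N2) // mulrC.
Qed.
(* With no rows the hypothesis forces s = 0 or N = 0: only the zero vector is s-sparse. *)
Lemma ric_le_no_rows m N s (A : 'M[R]_(m, N)) (eps delta : R) :
  m = 0%N -> 0 < eps -> eps < 1 -> 0 < delta ->
  16 * delta ^-2 * s%:R ^+ 2 * ln (2 * N%:R ^+ 2 / eps) ^+ 2 <= m%:R ->
  ric s A <= delta.
Proof.
move=> m0 e0 e1 d0 hyp; subst m; apply: ric_le; split; first exact: ltW.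
move=> x hx; have -> : sqnorm (A *m x) = 0 by rewrite /sqnorm big_ord0.
suff -> : sqnorm x = 0 by rewrite !mulr0 lexx.
case: s hyp hx => [|s] hyp; first exact: sqnorm_sparse0.
case: (posnP N) => [N0|N0] hx.
  by rewrite /sqnorm big1 // => j; have := ltn_ord j; rewrite {2}N0.
have N1 : (1 : R) <= N%:R by rewrite ler1n.
have L0 : 0 < ln (2 * N%:R ^+ 2 / eps).
  by rewrite ln_gt0 // ltr_pdivlMr //; nra.
have : 0 < 16 * delta ^-2 * s.+1%:R ^+ 2 * ln (2 * N%:R ^+ 2 / eps) ^+ 2.
  by rewrite mulr_gt0 ?exprn_gt0 // mulr_gt0 ?exprn_gt0 ?ltr0n // mulr_gt0 ?invr_gt0 ?exprn_gt0.
by lra.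
Qed.

Lemma prob_true M (P : pred {ffun 'I_M -> bool}) : (forall b, P b) -> prob R P = 1.
Proof.
move=> hP; rewrite /prob card_classical_set.
have -> : [set b | P b] = [set: {ffun 'I_M -> bool}] by apply/setP => b; rewrite !inE hP.
rewrite cardsT card_ffun card_bool card_ord.
by rewrite divff // pnatr_eq0 expn_eq0.
Qed.
End PartialCirculant.

Theorem corollary4 (R : realType) (N n s : nat) (Om : {set 'I_N})
  (eps delta : R) :
  #|Om| = n -> 0 < eps -> eps < 1 -> 0 < delta ->
  16 * delta ^-2 * (s%:R) ^+ 2 * (ln (2 * (N%:R) ^+ 2 / eps)) ^+ 2 <= n%:R ->
  prob R (fun b : {ffun 'I_N -> bool} =>
          ric s ((Num.sqrt n%:R)^-1 *: rowsubset Om (circulant R b)) <= delta)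
    >= 1 - eps
  /\
  prob R (fun c : {ffun 'I_(2 * N).-1 -> bool} =>
          ric s ((Num.sqrt n%:R)^-1 *: rowsubset Om (toeplitz R c)) <= delta)
    >= 1 - eps.
Proof.
move=> <- e0 e1 d0 hyp; have [Om0 | Om_gt0] := posnP #|Om|.
  split; rewrite prob_true; try lra; move=> b /=; exact: ric_le_no_rows hyp.
split; apply: prob_ric_le_of_gram_tail => //.
- exact: circulant_entry_sqr.
- by move=> L hL j k jk /=; apply: card_circulant_gram_tail.
- exact: toeplitz_entry_sqr.
- by move=> L hL j k jk /=; apply: card_toeplitz_gram_tail.
Qed.
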